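(* Suppose that $f$ is a non-negative $C^2$ function on $[-2\ell,2\ell]\subset\mathbb{R}$ satisfying $f''\ge f-a$ for some constant $a>0$. If $\max_{[-\ell,\ell]}f\ge2a$, then $\int_{-2\ell}^{2\ell}f\ge2\sqrt2\,a\sinh(\ell/\sqrt2)$.
   Context: $\ell>0$. *)

From Stdlib Require Import Reals.
From Coquelicot Require Import Coquelicot.
Open Scope R_scope.

(* g is the derivative of f on the closed interval [a,b]
   (one-sided at the endpoints: difference quotients taken within [a,b]). *)
Definition is_derive_on (a b : R) (f g : R -> R) : Prop :=
  forall x, a <= x <= b ->
    filterlim (fun h => (f (x + h) - f x) / h)
      (within (fun h => h <> 0 /\ a <= x + h <= b) (locally 0))
      (locally (g x)).

Definition continuous_on_cc (a b : R) (g : R -> R) : Prop :=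
  forall x, a <= x <= b ->
    filterlim g (within (fun y => a <= y <= b) (locally x)) (locally (g x)).

Definition C2_on_with (a b : R) (f f1 f2 : R -> R) : Prop :=
  is_derive_on a b f f1 /\ is_derive_on a b f1 f2 /\ continuous_on_cc a b f2.

From Stdlib Require Import Reals Lra.
From Coquelicot Require Import Coquelicot.
Open Scope R_scope.

(* Choose [x0] in [[-l, l]] with [f x0 >= 2a]; after the reflection [x |-> -x] we may
   assume [f' x0 >= 0].  Then [g := f - a] satisfies [g'' >= g], [g x0 >= a] and
   [g' x0 >= 0], and two integrating-factor arguments give [g x >= a cosh (x - x0)]
   for [x >= x0].  Since [cosh t + 1 >= 2 cosh (t / sqrt 2)], [f] dominates
   [2 a cosh ((x - x0) / sqrt 2)] on [[x0, x0 + l]], whose integral is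
   [2 sqrt 2 a sinh (l / sqrt 2)]; positivity of [f] handles the rest of [[-2l, 2l]]. *)

Lemma ball_Rabs (x e y : R) : ball x e y <-> Rabs (y - x) < e.
Proof. reflexivity. Qed.

Section DeriveOn.

Variables (A B : R) (f g : R -> R).
Hypothesis hd : is_derive_on A B f g.

Lemma is_derive_on_eps x : A <= x <= B ->
  forall eps, 0 < eps -> exists d, 0 < d /\
    forall h, h <> 0 -> A <= x + h <= B -> Rabs h < d ->
    Rabs ((f (x + h) - f x) / h - g x) < eps.
Proof.
  intros Hx eps Heps.
  destruct (proj1 (filterlim_locally _ _) (hd x Hx) (mkposreal eps Heps)) as [d Hd].
  exists d; split; [apply cond_pos |].
  intros h Hh0 Hh Hhd. apply (Hd h); [| exact (conj Hh0 Hh)].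
  apply ball_Rabs. rewrite Rminus_0_r. exact Hhd.
Qed.

Lemma is_derive_on_interior x : A < x < B -> is_derive f x (g x).
Proof.
  intros Hx. apply is_derive_Reals. intros eps Heps.
  destruct (is_derive_on_eps x ltac:(lra) eps Heps) as [d [Hd Hq]].
  assert (Hm : 0 < Rmin d (Rmin (x - A) (B - x))) by (repeat apply Rmin_pos; lra).
  exists (mkposreal _ Hm). intros h Hh0 Hh. simpl in Hh.
  pose proof (Rmin_l d (Rmin (x - A) (B - x))). pose proof (Rmin_r d (Rmin (x - A) (B - x))).
  pose proof (Rmin_l (x - A) (B - x)). pose proof (Rmin_r (x - A) (B - x)).
  apply Hq; [exact Hh0 | | lra].
  revert Hh; unfold Rabs; destruct Rcase_abs; lra.
Qed.

(* Near [x], [f y - f x] is [y - x] times a difference quotient bounded by [|g x| + 1]. *)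
Lemma is_derive_on_continuous : continuous_on_cc A B f.
Proof.
  intros x Hx. apply filterlim_locally. intros eps.
  destruct (is_derive_on_eps x Hx 1 Rlt_0_1) as [d [Hd Hq]].
  set (K := Rabs (g x) + 1).
  assert (HK : 0 < K) by (pose proof (Rabs_pos (g x)); unfold K; lra).
  assert (Hm : 0 < Rmin d (eps / K)).
  { apply Rmin_pos; [lra | apply Rdiv_lt_0_compat; [apply cond_pos | lra]]. }
  exists (mkposreal _ Hm). intros y Hyx Hy. change R in y.
  apply ball_Rabs. apply ball_Rabs in Hyx. simpl in Hyx.
  destruct (Req_dec y x) as [-> | Hne].
  { rewrite Rminus_diag, Rabs_R0. apply cond_pos. }
  pose proof (Rlt_le_trans _ _ _ Hyx (Rmin_l _ _)) as Hyd.
  pose proof (Rlt_le_trans _ _ _ Hyx (Rmin_r _ _)) as HyK.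
  pose proof (Hq (y - x) ltac:(lra) ltac:(replace (x + (y - x)) with y by ring; lra) Hyd) as Hqg.
  replace (x + (y - x)) with y in Hqg by ring.
  set (q := (f y - f x) / (y - x)) in Hqg.
  replace (f y - f x) with (q * (y - x)) by (unfold q; field; lra).
  assert (Hqb : Rabs q <= K).
  { pose proof (Rabs_triang (q - g x) (g x)) as Ht.
    replace (q - g x + g x) with q in Ht by ring. unfold K; lra. }
  rewrite Rabs_mult.
  apply Rle_lt_trans with (K * Rabs (y - x)).
  { apply Rmult_le_compat_r; [apply Rabs_pos | exact Hqb]. }
  pose proof (Rmult_lt_compat_l K _ _ HK HyK) as HKe.
  replace (K * (eps / K)) with (pos eps) in HKe by (field; lra). exact HKe.
Qed.

End DeriveOn.

(* Composing with [clamp A B] extends a function continuous on [[A, B]] to one continuous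
   on all of [R], to which Coquelicot's global continuity and integrability results apply. *)
Definition clamp (A B x : R) : R := Rmax A (Rmin B x).

Lemma clamp_in A B x : A <= B -> A <= clamp A B x <= B.
Proof. intros H. unfold clamp, Rmax, Rmin. repeat destruct Rle_dec; lra. Qed.

Lemma clamp_id A B x : A <= x <= B -> clamp A B x = x.
Proof. intros H. unfold clamp, Rmax, Rmin. repeat destruct Rle_dec; lra. Qed.

Lemma clamp_lipschitz A B x y : A <= B -> Rabs (clamp A B x - clamp A B y) <= Rabs (x - y).
Proof.
  intros H. unfold clamp, Rmax, Rmin.
  repeat destruct Rle_dec; unfold Rabs; repeat destruct Rcase_abs; lra.
Qed.

Lemma continuous_on_cc_clamp A B f : A <= B -> continuous_on_cc A B f ->
  forall x, continuous (fun y => f (clamp A B y)) x.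
Proof.
  intros HAB Hf x. apply (filterlim_comp _ _ _ (clamp A B) f _
    (within (fun y => A <= y <= B) (locally (clamp A B x))));
    [| exact (Hf _ (clamp_in A B x HAB))].
  intros P [eps HP]. exists eps. intros y Hy. simpl.
  apply HP; [| apply clamp_in, HAB].
  apply ball_Rabs. apply ball_Rabs in Hy.
  eapply Rle_lt_trans; [apply clamp_lipschitz, HAB | exact Hy].
Qed.

Lemma is_derive_on_clamp A B f g x : is_derive_on A B f g -> A < x < B ->
  is_derive (fun y => f (clamp A B y)) x (g x).
Proof.
  intros hd Hx. apply (is_derive_ext_loc f).
  - apply (locally_interval _ x A B); try (simpl; lra).
    intros y Hy1 Hy2. rewrite clamp_id; simpl in *; [reflexivity | lra].
  - exact (is_derive_on_interior A B f g hd x Hx).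
Qed.

Lemma is_derive_on_opp A B f g : is_derive_on A B f g ->
  is_derive_on A B (fun x => - f x) (fun x => - g x).
Proof.
  intros hd x Hx.
  eapply filterlim_ext;
    [| exact (filterlim_comp _ _ _ _ _ _ _ _ (hd x Hx) (filterlim_opp (g x)))].
  intros h. simpl. change (opp ?u) with (- u). unfold Rdiv. ring.
Qed.

Lemma is_derive_on_reflect A B f g : is_derive_on A B f g ->
  is_derive_on (- B) (- A) (fun x => f (- x)) (fun x => - g (- x)).
Proof.
  intros hd x Hx.
  assert (Hopp : filterlim opp
    (within (fun h => h <> 0 /\ - B <= x + h <= - A) (locally 0))
    (within (fun h => h <> 0 /\ A <= - x + h <= B) (locally 0))).
  { intros P [eps HP]. exists eps. intros h Hh [Hh0 HhAB]. apply HP.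
    - change (Rabs (- h - 0) < eps). change (Rabs (h - 0) < eps) in Hh.
      rewrite Rminus_0_r in *. rewrite Rabs_Ropp. exact Hh.
    - change (opp h) with (- h). split; lra. }
  eapply filterlim_ext;
    [| exact (filterlim_comp _ _ _ _ _ _ _ _
           (filterlim_comp _ _ _ _ _ _ _ _ Hopp (hd (- x) ltac:(lra)))
           (filterlim_opp (g (- x))))].
  intros h. simpl. change (opp ?u) with (- u).
  replace (- (x + h)) with (- x + - h) by ring.
  change (opp h) with (- h). unfold Rdiv. rewrite Rinv_opp. ring.
Qed.

Lemma nondecreasing_of_derive_nonneg (F dF : R -> R) (u v : R) : u <= v ->
  (forall x, u < x < v -> is_derive F x (dF x)) ->
  (forall x, u < x < v -> 0 <= dF x) ->
  (forall x, u <= x <= v -> continuous F x) -> F u <= F v.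
Proof.
  intros Huv Hder Hpos Hcont.
  destruct (Req_dec u v) as [<- | Hne]; [lra |].
  assert (pr1 : forall c, u < c < v -> derivable_pt F c).
  { intros c Hc. apply ex_derive_Reals_0. eexists. exact (Hder c Hc). }
  destruct (MVT F id u v pr1 (fun c _ => derivable_pt_id c) ltac:(lra))
    as [c [Hc Heq]].
  - intros c Hc. apply continuity_pt_filterlim, Hcont, Hc.
  - intros c Hc. apply derivable_continuous_pt, derivable_pt_id.
  - rewrite Derive_Reals, (is_derive_unique _ _ _ (Hder c Hc)) in Heq.
    unfold id in Heq. rewrite derive_pt_id in Heq.
    pose proof (Hpos c Hc). nra.
Qed.

Lemma cosh_opp x : cosh (- x) = cosh x.
Proof. unfold cosh. rewrite Ropp_involutive. field. Qed.

Lemma sinh_opp x : sinh (- x) = - sinh x.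
Proof. unfold sinh. rewrite Ropp_involutive. field. Qed.

Lemma cosh_pos x : 0 < cosh x.
Proof. unfold cosh. pose proof (exp_pos x). pose proof (exp_pos (- x)). lra. Qed.

Lemma cosh_le_cosh y x : 0 <= y <= x -> cosh y <= cosh x.
Proof.
  intros Hyx.
  apply (nondecreasing_of_derive_nonneg cosh sinh); try lra.
  - intros t _. apply is_derive_Reals, derivable_pt_lim_cosh.
  - intros t Ht. rewrite <- sinh_0. left. apply sinh_lt. lra.
  - intros t _. apply (ex_derive_continuous cosh).
    eexists. apply is_derive_Reals, derivable_pt_lim_cosh.
Qed.

(* Both sides agree to second order at [t = 0] exactly when [2 k^2 = 1]. *)
Lemma two_cosh_scal_le k t : 0 <= k -> 2 * k ^ 2 <= 1 -> 2 * cosh (k * t) <= cosh t + 1.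
Proof.
  intros Hk0 Hk.
  assert (Hpos : forall s, 0 <= s -> 2 * cosh (k * s) <= cosh s + 1).
  { intros s Hs.
    set (G := fun s => sinh s - 2 * k * sinh (k * s)).
    set (F := fun s => cosh s + 1 - 2 * cosh (k * s)).
    assert (HG : forall x, is_derive G x (cosh x - 2 * k ^ 2 * cosh (k * x))).
    { intros x. unfold G, sinh, cosh. auto_derive; [exact I | field]. }
    assert (HF : forall x, is_derive F x (G x)).
    { intros x. unfold F, G, sinh, cosh. auto_derive; [exact I | field]. }
    assert (HG0 : forall x, 0 <= x -> 0 <= G x).
    { intros x Hx. replace 0 with (G 0) by (unfold G; rewrite Rmult_0_r, sinh_0; ring).
      apply (nondecreasing_of_derive_nonneg G _ 0 x Hx (fun y _ => HG y)).
      - intros y Hy.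
        assert (Hky : cosh (k * y) <= cosh y) by (apply cosh_le_cosh; split; nra).
        pose proof (cosh_pos (k * y)). nra.
      - intros y _. apply (ex_derive_continuous G). eexists. apply HG. }
    assert (HF0 : F 0 <= F s).
    { apply (nondecreasing_of_derive_nonneg F G 0 s Hs (fun y _ => HF y)).
      - intros y Hy. apply HG0. lra.
      - intros y _. apply (ex_derive_continuous F). eexists. apply HF. }
    unfold F in HF0. rewrite Rmult_0_r, cosh_0 in HF0. lra. }
  destruct (Rle_dec 0 t) as [Ht | Ht]; [apply Hpos, Ht |].
  rewrite <- (cosh_opp t), <- (cosh_opp (k * t)), Ropp_mult_distr_r.
  apply Hpos. lra.
Qed.

Lemma two_cosh_div_sqrt2_le t : 2 * cosh (t / sqrt 2) <= cosh t + 1.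
Proof.
  assert (Hs2 : sqrt 2 <> 0) by exact sqrt2_neq_0.
  replace (t / sqrt 2) with (/ sqrt 2 * t) by (unfold Rdiv; ring).
  apply two_cosh_scal_le; [apply Rlt_le, Rinv_0_lt_compat, Rlt_sqrt2_0 |].
  replace ((/ sqrt 2) ^ 2) with (/ (sqrt 2 * sqrt 2)) by (field; exact Hs2).
  rewrite sqrt_sqrt by lra. lra.
Qed.

Ltac solve_continuous :=
  repeat match goal with
  | |- continuous (fun y => @?p y * @?q y) _ => apply (@continuous_mult _ R_AbsRing p q)
  | |- continuous (fun y => @?p y + @?q y) _ =>
      apply (@continuous_plus _ R_AbsRing R_NormedModule p q)
  | |- continuous (fun y => @?p y - @?q y) _ =>
      apply (@continuous_minus _ R_AbsRing R_NormedModule p q)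
  | |- continuous (fun y => exp (@?p y)) _ => apply (continuous_exp_comp p)
  | |- continuous (fun y => y) _ => apply continuous_id
  | |- continuous (fun _ => _) _ => apply continuous_const
  | |- continuous (fun y => ?g y) _ => solve [auto]
  end.

Section SecondOrderComparison.

Variables (A B c a : R) (f f1 f2 : R -> R).
Hypothesis hAB : A <= B.
Hypothesis hd1 : is_derive_on A B f f1.
Hypothesis hd2 : is_derive_on A B f1 f2.
Hypothesis hineq : forall x, A <= x <= B -> f2 x >= f x - c.

Let fe y := f (clamp A B y).
Let f1e y := f1 (clamp A B y).

Let fe_continuous y : continuous fe y.
Proof. exact (continuous_on_cc_clamp A B f hAB (is_derive_on_continuous A B f f1 hd1) y). Qed.

Let f1e_continuous y : continuous f1e y.
Proof. exact (continuous_on_cc_clamp A B f1 hAB (is_derive_on_continuous A B f1 f2 hd2) y). Qed.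

Let fe_eq y : A <= y <= B -> fe y = f y.
Proof. intros Hy. unfold fe. rewrite clamp_id; auto. Qed.

Let f1e_eq y : A <= y <= B -> f1e y = f1 y.
Proof. intros Hy. unfold f1e. rewrite clamp_id; auto. Qed.

Let Derive_fe y : A < y < B ->
  is_derive fe y (f1 y) /\ is_derive f1e y (f2 y) /\
  Derive (fun z => fe z) y = f1 y /\ Derive (fun z => f1e z) y = f2 y.
Proof.
  intros Hy.
  pose proof (is_derive_on_clamp A B f f1 y hd1 Hy) as Hd1.
  pose proof (is_derive_on_clamp A B f1 f2 y hd2 Hy) as Hd2.
  refine (conj Hd1 (conj Hd2 (conj _ _))); apply is_derive_unique; assumption.
Qed.

(* With [g := f - c], so that [g'' >= g], [(g' + g) e^(-y)] is nondecreasing. *)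
Lemma deriv_add_ge_exp x0 : A <= x0 -> a <= f1 x0 + f x0 - c ->
  forall y, x0 <= y <= B -> a * exp (y - x0) <= f1 y + f y - c.
Proof.
  intros HAx0 Hx0 y Hy.
  set (V := fun y => (f1e y + fe y - c) * exp (x0 - y)).
  assert (HV : V x0 <= V y).
  { apply (nondecreasing_of_derive_nonneg V (fun y => (f2 y - f y + c) * exp (x0 - y)));
      try lra.
    - intros t Ht. destruct (Derive_fe t ltac:(lra)) as (H1 & H2 & E1 & E2).
      unfold V. auto_derive.
      + repeat split; eexists; eassumption.
      + rewrite E1, E2, fe_eq, f1e_eq by lra. unfold Rminus. ring.
    - intros t Ht. pose proof (hineq t ltac:(lra)). pose proof (exp_pos (x0 - t)). nra.
    - intros t _. unfold V. solve_continuous. }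
  unfold V in HV. rewrite Rminus_diag, exp_0, fe_eq, f1e_eq, fe_eq, f1e_eq in HV by lra.
  pose proof (exp_pos (x0 - y)). pose proof (exp_pos (y - x0)).
  assert (Hinv : exp (x0 - y) * exp (y - x0) = 1)
    by (rewrite <- exp_plus; replace (x0 - y + (y - x0)) with 0 by ring; apply exp_0).
  assert (Hle : a * exp (y - x0) <= (f1 y + f y - c) * exp (x0 - y) * exp (y - x0))
    by (apply Rmult_le_compat_r; lra).
  rewrite Rmult_assoc, Hinv, Rmult_1_r in Hle. exact Hle.
Qed.

(* By [deriv_add_ge_exp], [g e^y - a e^(2y) / 2] is nondecreasing (with [g := f - c]). *)
Lemma cosh_le_of_deriv2_ge_right x0 : A <= x0 -> c + a <= f x0 -> 0 <= f1 x0 ->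
  forall x, x0 <= x <= B -> c + a * cosh (x - x0) <= f x.
Proof.
  intros HAx0 Hfx0 Hf1x0 x Hx.
  set (W := fun y => (fe y - c) * exp (y - x0) - a / 2 * (exp (y - x0) * exp (y - x0))).
  assert (HW : W x0 <= W x).
  { apply (nondecreasing_of_derive_nonneg W
      (fun y => (f1 y + f y - c - a * exp (y - x0)) * exp (y - x0))); try lra.
    - intros t Ht. destruct (Derive_fe t ltac:(lra)) as (H1 & _ & E1 & _).
      unfold W. auto_derive.
      + eexists; eassumption.
      + rewrite E1, fe_eq by lra. unfold Rminus. field.
    - intros t Ht. pose proof (deriv_add_ge_exp x0 HAx0 ltac:(lra) t ltac:(lra)).
      pose proof (exp_pos (t - x0)). nra.
    - intros t _. unfold W. solve_continuous. }
  unfold W in HW. rewrite Rminus_diag, exp_0, !fe_eq in HW by lra.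
  unfold cosh. rewrite exp_Ropp.
  pose proof (exp_pos (x - x0)). set (E := exp (x - x0)) in *.
  apply Rmult_le_reg_r with E; [lra |].
  replace ((c + a * ((E + / E) / 2)) * E) with (c * E + a / 2 * (E * E) + a / 2)
    by (field; lra).
  nra.
Qed.

End SecondOrderComparison.

Lemma cosh_le_of_deriv2_ge_left A B c a f f1 f2 :
  is_derive_on A B f f1 -> is_derive_on A B f1 f2 ->
  (forall x, A <= x <= B -> f2 x >= f x - c) ->
  forall x0, x0 <= B -> c + a <= f x0 -> f1 x0 <= 0 ->
  forall x, A <= x <= x0 -> c + a * cosh (x - x0) <= f x.
Proof.
  intros hd1 hd2 hineq x0 Hx0B Hfx0 Hf1x0 x Hx.
  pose proof (cosh_le_of_deriv2_ge_right (- B) (- A) c a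
    (fun x => f (- x)) (fun x => - f1 (- x)) (fun x => - - f2 (- x)) ltac:(lra)
    (is_derive_on_reflect A B f f1 hd1)
    (is_derive_on_reflect A B _ _ (is_derive_on_opp A B f1 f2 hd2))) as Hright.
  replace (x - x0) with (- (- x - - x0)) by ring. rewrite cosh_opp.
  rewrite <- (Ropp_involutive x) at 2.
  apply Hright; rewrite ?Ropp_involutive; try lra.
  intros y Hy. rewrite Ropp_involutive. apply hineq. lra.
Qed.

Lemma RInt_ge_of_minorant A B f h u v :
  continuous_on_cc A B f -> (forall x, A <= x <= B -> 0 <= f x) ->
  (forall x, continuous h x) -> A <= u -> u <= v -> v <= B ->
  (forall x, u <= x <= v -> h x <= f x) -> RInt h u v <= RInt f A B.
Proof.
  intros Hf Hnn Hh HAu Huv HvB Hhf.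
  assert (HAB : A <= B) by lra.
  set (fe := fun x => f (clamp A B x)).
  assert (Hfe_eq : forall x, A <= x <= B -> fe x = f x)
    by (intros x Hx; unfold fe; rewrite clamp_id; auto).
  assert (Hfe : forall p q, ex_RInt fe p q).
  { intros p q. apply (ex_RInt_continuous (V := R_CompleteNormedModule)).
    intros x _. exact (continuous_on_cc_clamp A B f HAB Hf x). }
  assert (Heq : RInt f A B = RInt fe A B).
  { apply RInt_ext. intros x Hx. rewrite Rmin_left, Rmax_right in Hx by lra.
    symmetry. apply Hfe_eq. lra. }
  pose proof (RInt_Chasles fe A u v (Hfe _ _) (Hfe _ _)) as Hsplit1.
  pose proof (RInt_Chasles fe A v B (Hfe _ _) (Hfe _ _)) as Hsplit2.
  change plus with Rplus in Hsplit1, Hsplit2.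
  assert (0 <= RInt fe A u).
  { apply RInt_ge_0; auto. intros x Hx. rewrite Hfe_eq by lra. apply Hnn. lra. }
  assert (0 <= RInt fe v B).
  { apply RInt_ge_0; auto. intros x Hx. rewrite Hfe_eq by lra. apply Hnn. lra. }
  assert (RInt h u v <= RInt fe u v).
  { apply RInt_le; auto.
    - apply (ex_RInt_continuous (V := R_CompleteNormedModule)). intros x _. apply Hh.
    - intros x Hx. rewrite Hfe_eq by lra. apply Hhf. lra. }
  lra.
Qed.

Lemma RInt_cosh_affine k r x0 u v : r <> 0 ->
  RInt (fun y => k * cosh ((y - x0) / r)) u v =
  k * r * (sinh ((v - x0) / r) - sinh ((u - x0) / r)).
Proof.
  intros Hr. apply is_RInt_unique.
  replace (k * r * (sinh ((v - x0) / r) - sinh ((u - x0) / r)))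
    with (k * r * sinh ((v - x0) / r) - k * r * sinh ((u - x0) / r)) by ring.
  apply (is_RInt_derive (fun y => k * r * sinh ((y - x0) / r))).
  - intros x _. unfold sinh, cosh. auto_derive; [exact I |].
    unfold Rminus, Rdiv. field. exact Hr.
  - intros x _. apply (ex_derive_continuous (fun y => k * cosh ((y - x0) / r))).
    unfold cosh. auto_derive. exact I.
Qed.

Theorem lemmaB4 (l a : R) (f f1 f2 : R -> R)
  (hl : 0 < l) (ha : 0 < a)
  (hC2 : C2_on_with (-(2 * l)) (2 * l) f f1 f2)
  (hnn : forall x, -(2 * l) <= x <= 2 * l -> 0 <= f x)
  (hineq : forall x, -(2 * l) <= x <= 2 * l -> f2 x >= f x - a)
  (hmax : exists x0, -l <= x0 <= l /\ f x0 >= 2 * a) :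
  RInt f (-(2 * l)) (2 * l) >= 2 * sqrt 2 * a * sinh (l / sqrt 2).
Proof.
  destruct hC2 as [hd1 [hd2 _]]. destruct hmax as [x0 [Hx0 Hfx0]].
  pose proof (is_derive_on_continuous _ _ f f1 hd1) as Hf.
  assert (Hs2 : sqrt 2 <> 0) by exact sqrt2_neq_0.
  set (lower := fun y => 2 * a * cosh ((y - x0) / sqrt 2)).
  assert (Hlower : forall y, a + a * cosh (y - x0) <= f y -> lower y <= f y).
  { intros y Hy. pose proof (two_cosh_div_sqrt2_le (y - x0)). unfold lower. nra. }
  assert (Hcont : forall y, continuous lower y).
  { intros y. apply (ex_derive_continuous lower). unfold lower, cosh. auto_derive. exact I. }
  apply Rle_ge. destruct (Rle_dec 0 (f1 x0)) as [Hf1 | Hf1].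
  - apply Rle_trans with (RInt lower x0 (x0 + l)).
    + unfold lower. rewrite RInt_cosh_affine by exact Hs2.
      replace ((x0 + l - x0) / sqrt 2) with (l / sqrt 2) by (field; exact Hs2).
      replace ((x0 - x0) / sqrt 2) with 0 by (field; exact Hs2).
      rewrite sinh_0. lra.
    + apply RInt_ge_of_minorant; auto; try lra.
      intros x Hx. apply Hlower.
      apply (cosh_le_of_deriv2_ge_right (- (2 * l)) (2 * l) a a f f1 f2 ltac:(lra)
        hd1 hd2 hineq x0); lra.
  - apply Rle_trans with (RInt lower (x0 - l) x0).
    + unfold lower. rewrite RInt_cosh_affine by exact Hs2.
      replace ((x0 - l - x0) / sqrt 2) with (- (l / sqrt 2)) by (field; exact Hs2).
      replace ((x0 - x0) / sqrt 2) with 0 by (field; exact Hs2).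
      rewrite sinh_0, sinh_opp. lra.
    + apply RInt_ge_of_minorant; auto; try lra.
      intros x Hx. apply Hlower.
      apply (cosh_le_of_deriv2_ge_left _ _ a a f f1 f2 hd1 hd2 hineq x0); lra.
Qed.
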